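(* Assume $a_j>0$ for all $j$ and let $B',B''>0$. There is a constant $C>0$ depending only on $B',B'',\eta$ and the fixed data ($F$, $a$) such that the following holds. Let $M,N\ge1$, $Q(\mathcal V)\in Q_{M,N}$, let $V_m=[b,b+\ell]$ be a maximal interval of $\mathcal V$ with $b\ge1$, and let $J(V_m)=J_1(V_m)\times\cdots\times J_{r+s}(V_m)$ be a choice with $Q(J(V_m))\neq\emptyset$; let $n_j$ be the left endpoint of $J_j(V_m)$ ($n_j=-\infty$ if $J_j(V_m)=[-\infty,b]$, in which case $e^{b-n_j}=\infty$). Let $$D=\{u^+(\mathbf t)\in U^+:|t_j|<B'\min\{\eta,e^{b-n_j}\},\ j=1,\dots,r+s\},\quad E=\{u^+(\mathbf t)\in U^+:|t_j|<B''\eta e^{-\ell a_j},\ j=1,\dots,r+s\}.$$ Then $D$ can be covered by at most $C\exp\!\bigl(\tfrac{h_{\max}(T)}{2}\ell\bigr)$ translates $u^+(\mathbf t_0)E$ of $E$ (with $u^+(\mathbf t_0)\in U^+$).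
   Context: Setup. Let $F$ be an algebraic number field with ring of integers $\mathcal O$, real embeddings $\sigma_1,\dots,\sigma_r$ and complex embeddings $\sigma_{r+1},\dots,\sigma_{r+s}$ (one from each conjugate pair). Let $G=\prod_{j=1}^r\mathrm{SL}_2(\mathbb R)\times\prod_{j=1}^s\mathrm{SL}_2(\mathbb C)$ and $\Gamma=\mathrm{SL}_2(\mathcal O)$, embedded in $G$ via $\gamma\mapsto(\sigma_1(\gamma),\dots,\sigma_{r+s}(\gamma))$ (entrywise); $X=\Gamma\backslash G$. Fix a diagonal element $a=\bigl(\mathrm{diag}(e^{i\theta_j}e^{a_j/2},e^{-i\theta_j}e^{-a_j/2})\bigr)_{j=1}^{r+s}\in G$ with $a_j\in\mathbb R$, $\theta_j\in[0,2\pi]$, $\theta_1=\dots=\theta_r=0$, and let $T:X\to X$, $T(x)=xa$. Put $h_{\max}(T)=\sum_{j\le r}|a_j|+2\sum_{j>r}|a_j|$. Set $\delta_j=1$ for $j\le r$, $\delta_j=2$ for $j>r$. Vectors in $(\mathbb R^2)^r\times(\mathbb C^2)^s$ are written $v=(v_1',v_1'')\times\cdots\times(v_{r+s}',v_{r+s}'')$; $\mathcal O$ acts by $\lambda\cdot v=(\sigma_j(\lambda)v_j',\sigma_j(\lambda)v_j'')_j$, $G$ acts on the right componentwise. A point $x=\Gamma g$ is identified with the $\mathcal O$-module $\Lambda_x$ generated by the two rows of $g$; $\Lambda_{T(x)}=\Lambda_xa$. Define $|(v_j',v_j'')|=\max\{|v_j'|,|v_j''|\}$, $\|v\|=\prod_j|(v_j',v_j'')|^{\delta_j}$,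 $\mathrm{ht}(x)=\max\{\|v\|^{-1}:v\in\Lambda_x\setminus\{0\}\}$, $X_{<M}=\{\mathrm{ht}<M\}$, $X_{\ge M}=X\setminus X_{<M}$. For $M,N\ge1$, $Q_{M,N}=\bigvee_{n=0}^{N-1}T^{-n}\{X_{<M},X_{\ge M}\}$; its elements are the sets $Q(\mathcal V)=\{x\in X:\forall n\in[0,N-1],\ T^n(x)\in X_{\ge M}\iff n\in\mathcal V\}$ for $\mathcal V\subset\{0,\dots,N-1\}$. For a maximal interval $V_m=[b_m,b_m+\ell_m]$ of consecutive integers in $\mathcal V$ and $j\in\{1,\dots,r+s\}$, $\mathcal I_j(V_m)$ consists of the intervals $I_{0,j}=[-\infty,b_m]$, $I_{n,j}=(b_m+(n-1)a_j,\,b_m+na_j]$ for $1\le n\le\ell_m$, and $I_{\ell_m+1,j}=(b_m+\ell_ma_j,\infty]$. For a choice $J(V_m)=J_1(V_m)\times\cdots\times J_{r+s}(V_m)$ with $J_j(V_m)\in\mathcal I_j(V_m)$, $Q(J(V_m))$ is the set of $x\in Q(\mathcal V)$ for which there exists $v\in\Lambda_{T^{b_m-1}(x)}$ with $\|va^n\|\le1/M$ for all $n\in[1,\ell_m+1]$ and with $|v_j''|=|v_j'|e^{s_j}$ for some $s_j\in J_j(V_m)-b_m$, for every $j$ (allowing $s_j=\pm\infty$). $U^+=\{g:a^{-n}ga^n\to1\text{ as }n\to-\infty\}$; when all $a_j>0$, $U^+=\{u^+(\mathbf t):\mathbf t\in\mathbb R^r\times\mathbb C^s\}$ with $u^+(\mathbf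 t)=\Bigl(\begin{pmatrix}1&0\\t_j&1\end{pmatrix}\Bigr)_{j=1}^{r+s}$, and $u^+(\mathbf t)u^+(\mathbf t')=u^+(\mathbf t+\mathbf t')$. $\eta>0$ is a fixed small constant. *)

From Stdlib Require Import Reals.
From HB Require Import structures.
From mathcomp Require Import all_boot all_order all_algebra all_field.

Set Implicit Arguments.
Unset Strict Implicit.
Unset Printing Implicit Defensive.

Local Open Scope R_scope.

Record Cx := mkCx { cre : R; cim : R }.
Definition C0 : Cx := mkCx 0 0.
Definition C1 : Cx := mkCx 1 0.
Definition Cadd (z w : Cx) : Cx := mkCx (cre z + cre w) (cim z + cim w).
Definition Cmul (z w : Cx) : Cx :=
  mkCx (cre z * cre w - cim z * cim w) (cre z * cim w + cim z * cre w).
Definition Csub (z w : Cx) : Cx := mkCx (cre z - cre w) (cim z - cim w).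
Definition Cconj (z : Cx) : Cx := mkCx (cre z) (- cim z).
Definition Cnorm (z : Cx) : R := sqrt (cre z ^ 2 + cim z ^ 2).

Definition ring_hom_C (L : fieldExtType rat) (f : L -> Cx) : Prop :=
  (forall x y : L, f (x + y)%R = Cadd (f x) (f y)) /\
  (forall x y : L, f (x * y)%R = Cmul (f x) (f y)) /\
  f (1%R : L) = C1.

Definition alg_int (L : fieldExtType rat) (x : L) : Prop :=
  exists p : {poly int},
    p \is monic /\ root (map_poly (fun z : int => (z%:~R : L)%R) p) x.

(* sigma 0..r-1 are the real embeddings, sigma r..r+s-1 are the complex
   embeddings, one from each conjugate pair; these are ALL embeddings
   L -> C up to complex conjugation, pairwise distinct. *)
Definition embedding_family (L : fieldExtType rat) (r s : nat)
    (sigma : nat -> L -> Cx) : Prop :=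
  (forall j, (j < r + s)%N -> ring_hom_C (sigma j)) /\
  (forall j, (j < r)%N -> forall x, cim (sigma j x) = 0) /\
  (forall j, (r <= j)%N -> (j < r + s)%N -> exists x, cim (sigma j x) <> 0) /\
  (forall i j, (i < r + s)%N -> (j < r + s)%N -> i <> j ->
      (exists x, sigma i x <> sigma j x) /\
      (exists x, sigma i x <> Cconj (sigma j x))) /\
  (forall tau : L -> Cx, ring_hom_C tau ->
      exists j, (j < r + s)%N /\
        ((forall x, tau x = sigma j x) \/ (forall x, tau x = Cconj (sigma j x)))).

Record M2 := mkM2 { m11 : Cx; m12 : Cx; m21 : Cx; m22 : Cx }.
Definition M2mul (A B : M2) : M2 :=
  mkM2 (Cadd (Cmul (m11 A) (m11 B)) (Cmul (m12 A) (m21 B)))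
       (Cadd (Cmul (m11 A) (m12 B)) (Cmul (m12 A) (m22 B)))
       (Cadd (Cmul (m21 A) (m11 B)) (Cmul (m22 A) (m21 B)))
       (Cadd (Cmul (m21 A) (m12 B)) (Cmul (m22 A) (m22 B))).
Definition M2det (A : M2) : Cx := Csub (Cmul (m11 A) (m22 A)) (Cmul (m12 A) (m21 A)).

(* elements of G: components indexed by j = 0 .. r+s-1 (others are ignored) *)
Definition Gelt := nat -> M2.
Definition in_G (r s : nat) (g : Gelt) : Prop :=
  forall j, (j < r + s)%N ->
    M2det (g j) = C1 /\
    ((j < r)%N -> cim (m11 (g j)) = 0 /\ cim (m12 (g j)) = 0 /\
                  cim (m21 (g j)) = 0 /\ cim (m22 (g j)) = 0).
Definition Geq (r s : nat) (g h : Gelt) : Prop := forall j, (j < r + s)%N -> g j = h j.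
Definition gmul (g h : Gelt) : Gelt := fun j => M2mul (g j) (h j).

Definition adiag (aa th : nat -> R) : Gelt := fun j =>
  mkM2 (mkCx (cos (th j) * exp (aa j / 2)) (sin (th j) * exp (aa j / 2))) C0
       C0 (mkCx (cos (th j) * exp (- aa j / 2)) (- sin (th j) * exp (- aa j / 2))).

(* T^n (Gamma g) = Gamma (g a^n) *)
Definition Tpow (aa th : nat -> R) (n : nat) (g : Gelt) : Gelt :=
  Nat.iter n (fun g' => gmul g' (adiag aa th)) g.

Definition Vec := nat -> (Cx * Cx).
Definition vec_act (p : Cx * Cx) (A : M2) : Cx * Cx :=
  (Cadd (Cmul p.1 (m11 A)) (Cmul p.2 (m21 A)),
   Cadd (Cmul p.1 (m12 A)) (Cmul p.2 (m22 A))).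
Definition vact (v : Vec) (g : Gelt) : Vec := fun j => vec_act (v j) (g j).
Definition vapow (aa th : nat -> R) (n : nat) (v : Vec) : Vec :=
  Nat.iter n (fun w => vact w (adiag aa th)) v.

Definition compnorm (p : Cx * Cx) : R := Rmax (Cnorm p.1) (Cnorm p.2).
Definition delta (r j : nat) : nat := if (j < r)%N then 1%N else 2%N.
Fixpoint prodR (n : nat) (f : nat -> R) : R :=
  match n with O => 1 | S m => prodR m f * f m end.
Fixpoint sumR (n : nat) (f : nat -> R) : R :=
  match n with O => 0 | S m => sumR m f + f m end.
Definition vnorm (r s : nat) (v : Vec) : R :=
  prodR (r + s) (fun j => compnorm (v j) ^ delta r j).
Definition nonzero_vec (r s : nat) (v : Vec) : Prop :=
  exists j, (j < r + s)%N /\ v j <> (C0, C0).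

(* Lambda_x for x = Gamma g : the O-module generated by the rows of g *)
Definition in_lattice (L : fieldExtType rat) (sigma : nat -> L -> Cx) (r s : nat)
    (g : Gelt) (v : Vec) : Prop :=
  exists alpha beta : L, alg_int alpha /\ alg_int beta /\
    forall j, (j < r + s)%N ->
      v j = (Cadd (Cmul (sigma j alpha) (m11 (g j))) (Cmul (sigma j beta) (m21 (g j))),
             Cadd (Cmul (sigma j alpha) (m12 (g j))) (Cmul (sigma j beta) (m22 (g j)))).

(* ht(Gamma g) < M, where ht = max { ||v||^-1 : v in Lambda \ 0 }
   (stated as: every nonzero lattice vector has ||v||^-1 < M, i.e. 1 < M ||v||) *)
Definition ht_lt (L : fieldExtType rat) (sigma : nat -> L -> Cx) (r s : nat)
    (g : Gelt) (M : R) : Prop :=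
  forall v, in_lattice sigma r s g v -> nonzero_vec r s v -> 1 < M * vnorm r s v.

Definition in_QV (L : fieldExtType rat) (sigma : nat -> L -> Cx) (r s : nat)
    (aa th : nat -> R) (M : R) (N : nat) (V : nat -> Prop) (g : Gelt) : Prop :=
  forall n, (n < N)%N -> (~ ht_lt sigma r s (Tpow aa th n g) M <-> V n).

Definition max_interval (V : nat -> Prop) (b l : nat) : Prop :=
  (forall n, (b <= n)%N -> (n <= b + l)%N -> V n) /\
  (b = 0%N \/ ~ V (b - 1)%N) /\ ~ V (b + l + 1)%N.

(* extended reals for s_j = +-infinity *)
Inductive ER := ERfin (x : R) | ERpinf | ERninf.

(* s in I_{k,j} - b, where I_{0,j} = [-inf, b], I_{k,j} = (b+(k-1)a_j, b+k a_j]
   for 1 <= k <= l, and I_{l+1,j} = (b + l a_j, +inf] *)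
Definition in_Ishift (l k : nat) (aj : R) (s : ER) : Prop :=
  if k == 0%N then (match s with ERninf => True | ERfin x => x <= 0 | ERpinf => False end)
  else if (k <= l)%N then
    (match s with ERfin x => INR (k - 1) * aj < x /\ x <= INR k * aj | _ => False end)
  else (match s with ERpinf => True | ERfin x => INR l * aj < x | ERninf => False end).

(* |v''| = |v'| e^s  (with e^{+inf} = inf, e^{-inf} = 0) *)
Definition ratio_rel (p : Cx * Cx) (s : ER) : Prop :=
  match s with
  | ERfin x => Cnorm p.2 = Cnorm p.1 * exp x
  | ERpinf => Cnorm p.1 = 0
  | ERninf => Cnorm p.2 = 0
  end.

(* Gamma g in Q(J(V_m)), where J_j(V_m) = I_{k j, j}, V_m = [b, b+l] *)
Definition in_QJ (L : fieldExtType rat) (sigma : nat -> L -> Cx) (r s : nat)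
    (aa th : nat -> R) (M : R) (N : nat) (V : nat -> Prop) (b l : nat)
    (k : nat -> nat) (g : Gelt) : Prop :=
  in_QV sigma r s aa th M N V g /\
  exists v : Vec,
    in_lattice sigma r s (Tpow aa th (b - 1) g) v /\ nonzero_vec r s v /\
    (forall n, (1 <= n)%N -> (n <= l + 1)%N -> vnorm r s (vapow aa th n v) <= / M) /\
    (forall j, (j < r + s)%N -> exists sj, in_Ishift l (k j) (aa j) sj /\ ratio_rel (v j) sj).

Definition uplus (t : nat -> Cx) : Gelt := fun j => mkM2 C1 C0 (t j) C1.
Definition real_par (r : nat) (t : nat -> Cx) : Prop := forall j, (j < r)%N -> cim (t j) = 0.

(* min{eta, e^{b - n_j}} with n_j the left endpoint of J_j(V_m) *)
Definition Dbound (eta : R) (aa : nat -> R) (k : nat -> nat) (j : nat) : R :=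
  if k j == 0%N then eta else Rmin eta (exp (- (INR (k j - 1) * aa j))).

Definition in_D (r s : nat) (B' eta : R) (aa : nat -> R) (k : nat -> nat) (g : Gelt) : Prop :=
  exists t, real_par r t /\
    (forall j, (j < r + s)%N -> Cnorm (t j) < B' * Dbound eta aa k j) /\ Geq r s g (uplus t).

Definition in_E (r s : nat) (B'' eta : R) (aa : nat -> R) (l : nat) (g : Gelt) : Prop :=
  exists t, real_par r t /\
    (forall j, (j < r + s)%N -> Cnorm (t j) < B'' * eta * exp (- (INR l * aa j))) /\
    Geq r s g (uplus t).

Definition hmax (r s : nat) (aa : nat -> R) : R :=
  sumR (r + s) (fun j => INR (delta r j) * Rabs (aa j)).

From Pilot Require Import Defs.
From Stdlib Require Import Reals Lra Lia Classical ZArith.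
From HB Require Import structures.
From mathcomp Require Import all_boot all_order all_algebra all_field.
From mathcomp Require Import zify.

Local Open Scope R_scope.

(* Both D and E are boxes in the coordinates t_j of U^+ = R^r x C^s, so a
   cover of D by translates u^+(t0) E is a product of one-dimensional
   covers: an interval (resp. a disc) of radius R_j is covered by at most
   (4 R_j / rho_j + 1)^delta_j intervals (resp. discs) of radius rho_j.
   The content of the lemma is the bound C e^(h_max l / 2) on the product
   of these counts, which comes from the dynamics.  The vector v
   witnessing Q(J(V_m)) has ||v|| > 1/M, because b - 1 is not in V, and
   ||v a^(l+1)|| <= 1/M; moreover a^n scales |v_j'| by e^(n a_j / 2) and
   |v_j''| by e^(-n a_j / 2).  The position of log(|v_j''| / |v_j'|) in
   the interval J_j(V_m) then gives, coordinate by coordinate,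
     (4 R_j / rho_j + 1) |v_j| <= C_j e^(l a_j / 2) |(v a^(l+1))_j|,
   and multiplying over j yields
     count * ||v|| <= C e^(h_max l / 2) ||v a^(l+1)|| <= C e^(h_max l / 2) ||v||. *)

Lemma prodR_ext n f g :
  (forall j, (j < n)%N -> f j = g j) -> prodR n f = prodR n g.
Proof.
elim: n => [|n IH] fg //=.
by rewrite IH ?fg // => j hj; apply: fg; lia.
Qed.

Lemma sumR_ext n f g :
  (forall j, (j < n)%N -> f j = g j) -> sumR n f = sumR n g.
Proof.
elim: n => [|n IH] fg //=.
by rewrite IH ?fg // => j hj; apply: fg; lia.
Qed.

Lemma prodR_mul n f g : prodR n (fun j => f j * g j) = prodR n f * prodR n g.
Proof. by elim: n => [|n IH] /=; [ring | rewrite IH; ring]. Qed.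

Lemma sumR_mulr n f c : sumR n f * c = sumR n (fun j => f j * c).
Proof. by elim: n => [|n IH] /=; [ring | rewrite -IH; ring]. Qed.

Lemma prodR_gt0 n f : (forall j, (j < n)%N -> 0 < f j) -> 0 < prodR n f.
Proof.
elim: n => [|n IH] f_gt0 /=; first lra.
by apply: Rmult_lt_0_compat; [apply: IH => j hj | ]; apply: f_gt0; lia.
Qed.

Lemma prodR_ge0 n f : (forall j, (j < n)%N -> 0 <= f j) -> 0 <= prodR n f.
Proof.
elim: n => [|n IH] f_ge0 /=; first lra.
by apply: Rmult_le_pos; [apply: IH => j hj | ]; apply: f_ge0; lia.
Qed.

Lemma prodR_le n f g :
  (forall j, (j < n)%N -> 0 <= f j <= g j) -> prodR n f <= prodR n g.
Proof.
elim: n => [|n IH] fg /=; first lra.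
have f_ge0 : 0 <= prodR n f.
  by apply: prodR_ge0 => j hj; have [] : 0 <= f j <= g j by apply: fg; lia.
have IHn : prodR n f <= prodR n g by apply: IH => j hj; apply: fg; lia.
by have fg_n := fg n (ltnSn n); apply: Rmult_le_compat; lra.
Qed.

Lemma prodR_exp n f : prodR n (fun j => exp (f j)) = exp (sumR n f).
Proof. by elim: n => [|n IH] /=; [rewrite exp_0 | rewrite IH exp_plus]. Qed.

Lemma exp_le {x y : R} : x <= y -> exp x <= exp y.
Proof. by case=> [/exp_increasing|->]; lra. Qed.

Lemma exp_ge1 {x : R} : 0 <= x -> 1 <= exp x.
Proof. by rewrite -exp_0; apply: exp_le. Qed.

Lemma exp_pow x m : exp x ^ m = exp (INR m * x).
Proof.
elim: m => [|m IH]; first by rewrite /= Rmult_0_l exp_0.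
by rewrite -tech_pow_Rmult IH S_INR -exp_plus; f_equal; ring.
Qed.

Lemma INR_predn k : (0 < k)%N -> INR (k - 1) = INR k - 1.
Proof. by case: k => // k _; rewrite subSS subn0 S_INR; ring. Qed.

Lemma Cnorm_ge0 z : 0 <= Cnorm z.
Proof. exact: sqrt_pos. Qed.

Lemma Cnorm_mul z w : Cnorm (Cmul z w) = Cnorm z * Cnorm w.
Proof.
case: z w => a b [c d]; rewrite /Cnorm /Cmul /= -sqrt_mult; try nra.
by f_equal; ring.
Qed.

Lemma Cnorm_sq a b e : 0 <= e -> a ^ 2 + b ^ 2 = e ^ 2 -> Cnorm (mkCx a b) = e.
Proof. by move=> e_ge0 abe; rewrite /Cnorm /= abe sqrt_pow2. Qed.

Lemma Cnorm_polar t e : 0 <= e -> Cnorm (mkCx (cos t * e) (sin t * e)) = e.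
Proof. by move=> e_ge0; apply: Cnorm_sq => //; have := sin2_cos2 t; rewrite /Rsqr; nra. Qed.

Lemma Cnorm_polar_conj t e : 0 <= e -> Cnorm (mkCx (cos t * e) (- sin t * e)) = e.
Proof. by move=> e_ge0; apply: Cnorm_sq => //; have := sin2_cos2 t; rewrite /Rsqr; nra. Qed.

Lemma Cnorm_re_le z : Rabs (cre z) <= Cnorm z.
Proof.
rewrite /Cnorm -(sqrt_pow2 (Rabs (cre z))); last exact: Rabs_pos.
by apply: sqrt_le_1_alt; rewrite -Rsqr_pow2 -Rsqr_abs Rsqr_pow2; nra.
Qed.

Lemma Cnorm_im_le z : Rabs (cim z) <= Cnorm z.
Proof.
rewrite /Cnorm -(sqrt_pow2 (Rabs (cim z))); last exact: Rabs_pos.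
by apply: sqrt_le_1_alt; rewrite -Rsqr_pow2 -Rsqr_abs Rsqr_pow2; nra.
Qed.

Lemma Cnorm_lt a b e : 0 < e -> a ^ 2 + b ^ 2 < e ^ 2 -> Cnorm (mkCx a b) < e.
Proof.
move=> e_gt0 abe; rewrite /Cnorm /= -(sqrt_pow2 e); last lra.
by apply: sqrt_lt_1_alt; nra.
Qed.

Lemma vec_act_adiag aa th j x y :
  vec_act (x, y) (adiag aa th j) =
  (Cmul x (mkCx (cos (th j) * exp (aa j / 2)) (sin (th j) * exp (aa j / 2))),
   Cmul y (mkCx (cos (th j) * exp (- aa j / 2)) (- sin (th j) * exp (- aa j / 2)))).
Proof.
by case: x y => [? ?] [? ?]; rewrite /vec_act /Cadd /Cmul /C0 /=; f_equal; f_equal; ring.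
Qed.

Lemma vapow_norm aa th n v j :
  Cnorm (vapow aa th n v j).1 = Cnorm (v j).1 * exp (INR n * aa j / 2) /\
  Cnorm (vapow aa th n v j).2 = Cnorm (v j).2 * exp (- (INR n * aa j) / 2).
Proof.
elim: n => [|n [IH1 IH2]].
  by rewrite /= !Rmult_0_l Ropp_0 /Rdiv Rmult_0_l exp_0 !Rmult_1_r.
have -> : vapow aa th n.+1 v j = vec_act (vapow aa th n v j) (adiag aa th j) by [].
rewrite S_INR; case: (vapow aa th n v j) IH1 IH2 => [x y] IH1 IH2.
rewrite vec_act_adiag /= !Cnorm_mul {}IH1 {}IH2.
rewrite Cnorm_polar ?Cnorm_polar_conj; try exact: Rlt_le (exp_pos _).
by rewrite !Rmult_assoc -!exp_plus; split; do 2 f_equal; field.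
Qed.

Lemma nat_floor z n : 0 <= z -> z < INR n ->
  exists i, (i < n)%N /\ INR i <= z < INR i + 1.
Proof.
elim: n => [|n IH] z_ge0 z_lt; first by rewrite /= in z_lt; lra.
case: (Rlt_le_dec z (INR n)) => [/(IH z_ge0) [i [i_lt iz]]|nz].
  by exists i; split => //; lia.
by exists n; split => //; rewrite S_INR in z_lt; lra.
Qed.

Lemma nat_ceil y : 0 <= y -> exists n : nat, y < INR n /\ INR n <= y + 1.
Proof.
move=> y_ge0; have [up_gt up_le] := archimed y.
have up_ge0 : Z.le 0 (up y) by apply: le_IZR; lra.
by exists (Z.to_nat (up y)); rewrite INR_IZR_INZ Z2Nat.id //; lra.
Qed.

Lemma interval_cover rad h : 0 < h -> 0 <= rad -> exists n : nat,
  INR n <= 2 * rad / h + 1 /\ forall x, -rad < x < rad ->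
  exists i, (i < n)%N /\ -rad + INR i * h <= x < -rad + INR i * h + h.
Proof.
move=> h_gt0 rad_ge0.
have [n [n_gt n_le]] : exists n : nat, 2 * rad / h < INR n /\ INR n <= 2 * rad / h + 1.
  by apply: nat_ceil; apply: Rle_mult_inv_pos; lra.
exists n; split => // x x_in.
have [i [i_lt i_x]] : exists i, (i < n)%N /\ INR i <= (x + rad) / h < INR i + 1.
  apply: nat_floor; first by apply: Rle_mult_inv_pos; lra.
  by apply: Rle_lt_trans n_gt; apply: Rmult_le_compat_r; [apply: Rlt_le; apply: Rinv_0_lt_compat|]; lra.
exists i; split => //.
have x_rad : (x + rad) / h * h = x + rad by field; lra.
by split; nra.
Qed.

(* A real interval (delta = 1) or a complex disc (delta = 2) of radius rad
   is covered by at most (4 rad / rho + 1)^delta balls of radius rho, whose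
   centres are real in the real case: one takes the centres of a grid of
   intervals (resp. squares) of side rho / 2. *)
Lemma coordinate_cover rad rho (real : bool) : 0 < rho -> 0 <= rad ->
  exists (n : nat) (c : nat -> Cx),
    INR n <= (4 * rad / rho + 1) ^ (if real then 1%N else 2%N) /\
    (real -> forall i, cim (c i) = 0) /\
    forall z, Cnorm z < rad -> (real -> cim z = 0) ->
      exists i, (i < n)%N /\ Cnorm (Csub z (c i)) < rho.
Proof.
move=> rho_gt0 rad_ge0.
have [n [n_le grid]] := @interval_cover rad (rho / 2) ltac:(lra) rad_ge0.
have -> : 4 * rad / rho + 1 = 2 * rad / (rho / 2) + 1 by field; lra.
pose x i := - rad + INR i * (rho / 2).
have re_in z : Cnorm z < rad -> - rad < cre z < rad.
  by move=> zR; have := Rabs_def2 _ _ (Rle_lt_trans _ _ _ (Cnorm_re_le z) zR); lra.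
have im_in z : Cnorm z < rad -> - rad < cim z < rad.
  by move=> zR; have := Rabs_def2 _ _ (Rle_lt_trans _ _ _ (Cnorm_im_le z) zR); lra.
case: real.
- exists n, (fun i => mkCx (x i) 0); split; first by rewrite pow_1.
  split => // z zR /(_ isT) z_real.
  have [i [i_lt i_z]] := grid _ (re_in z zR).
  by exists i; split => //; apply: Cnorm_lt => //=; rewrite z_real /x; nra.
- exists (n * n)%N, (fun i => mkCx (x (i %% n)%N) (x (i %/ n)%N)).
  split; first by rewrite mult_INR /=; have := pos_INR n; nra.
  split => // z zR _.
  have [i1 [i1_lt i1_z]] := grid _ (re_in z zR).
  have [i2 [i2_lt i2_z]] := grid _ (im_in z zR).
  have n_gt0 : (0 < n)%N by lia.
  exists (i2 * n + i1)%N; split; first nia.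
  rewrite divnMDl // divn_small // addn0 modnMDl modn_small //.
  by apply: Cnorm_lt => //=; rewrite /x; nra.
Qed.

Lemma product_cover (r m : nat) (bd rad rho : nat -> R) :
  (forall j, (j < m)%N -> exists (n : nat) (c : nat -> Cx), INR n <= bd j /\
     ((j < r)%N -> forall i, cim (c i) = 0) /\
     forall z, Cnorm z < rad j -> ((j < r)%N -> cim z = 0) ->
       exists i, (i < n)%N /\ Cnorm (Csub z (c i)) < rho j) ->
  exists (K : nat) (t0 : nat -> nat -> Cx), INR K <= prodR m bd /\
    (forall i j, (j < r)%N -> cim (t0 i j) = 0) /\
    forall t, (forall j, (j < m)%N -> Cnorm (t j) < rad j /\ ((j < r)%N -> cim (t j) = 0)) ->
      exists i, (i < K)%N /\ forall j, (j < m)%N -> Cnorm (Csub (t j) (t0 i j)) < rho j.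
Proof.
elim: m => [|m IH] covers.
  exists 1%N, (fun _ _ => C0); split; first by rewrite /=; lra.
  by split => // t _; exists 0%N; split => // j; lia.
have [|K [t0 [K_le [t0_real t0_cover]]]] := IH; first by move=> j hj; apply: covers; lia.
have [n [c [n_le [c_real c_cover]]]] := covers m (ltnSn m).
exists (K * n)%N, (fun i j => if (j == m)%N then c (i %% n)%N else t0 (i %/ n)%N j).
split; first by rewrite mult_INR /=; apply: Rmult_le_compat => //; apply: pos_INR.
split=> [i j j_lt|t t_in].
  by case: eqP => [e|_]; [subst j; apply: c_real | apply: t0_real].
have [|i0 [i0_lt i0_cover]] := t0_cover t; first by move=> j hj; apply: t_in; lia.
have [i1 [i1_lt i1_cover]] : exists i, (i < n)%N /\ Cnorm (Csub (t m) (c i)) < rho m.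
  by case: (t_in m (ltnSn m)) => tR t_real; apply: c_cover.
have n_gt0 : (0 < n)%N by lia.
exists (i0 * n + i1)%N; split; first nia.
move=> j j_lt; rewrite divnMDl // divn_small // addn0 modnMDl modn_small //.
by case: eqP => [e|j_ne]; [subst j | apply: i0_cover; lia].
Qed.

Lemma ratio_bounds {l k : nat} {a : R} {z : Cx * Cx} {s : ER} :
  0 < a -> in_Ishift l k a s -> ratio_rel z s ->
  [/\ (k = 0)%N -> Cnorm z.2 <= Cnorm z.1,
      (0 < k)%N -> Cnorm z.1 <= Cnorm z.2 &
      (0 < k <= l)%N -> Cnorm z.2 <= Cnorm z.1 * exp (INR k * a)].
Proof.
move=> a_gt0; have p_ge0 := Cnorm_ge0 z.1; have q_ge0 := Cnorm_ge0 z.2.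
rewrite /in_Ishift; case: k => [|k] /=.
  case: s => [x x_le0 ->||_ ->] //=; split=> //; try lia.
  by have := exp_le x_le0; rewrite exp_0; nra.
have ka_ge0 : 0 <= INR k * a by have := pos_INR k; nra.
have la_ge0 : 0 <= INR l * a by have := pos_INR l; nra.
case: ifP => [k_le|k_gt]; rewrite ?subSS ?subn0.
  case: s => [x [x_gt x_le] ->||] //=.
  have x_ge1 : 1 <= exp x by apply: exp_ge1; lra.
  have := exp_le x_le; split=> //; nra.
case: s => [x x_gt ->|_ ->|] //=; split=> //; try lia.
have x_ge1 : 1 <= exp x by apply: exp_ge1; lra.
nra.
Qed.

Lemma ratio_regimes {a D : R} {l k : nat} {z : Cx * Cx} {s : ER} :
  0 < a -> 0 <= D -> (k <= l + 1)%N ->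
  ((0 < k)%N -> D <= exp (- (INR (k - 1) * a))) ->
  in_Ishift l k a s -> ratio_rel z s ->
  Cnorm z.2 <= Cnorm z.1 \/
  (Cnorm z.1 <= Cnorm z.2 /\
   (D * Cnorm z.2 <= Cnorm z.1 * exp a \/ D * exp (INR l * a) <= 1)).
Proof.
move=> a_gt0 D_ge0 k_le D_le I_s ratio_s.
have [q_le_p p_le_q q_le] := ratio_bounds a_gt0 I_s ratio_s.
case: (posnP k) => [k0|k_gt0]; [by left; apply: q_le_p | right].
split; first exact: p_le_q.
have D_exp := D_le k_gt0; rewrite INR_predn // in D_exp.
case: (leqP k l) => [k_le_l|k_gt_l]; [left | right].
- have q_le' : Cnorm z.2 <= Cnorm z.1 * exp (INR k * a).
    by apply: q_le; rewrite k_gt0 k_le_l.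
  have Dexp : D * exp (INR k * a) <= exp a.
    have := Rmult_le_compat_r _ _ _ (Rlt_le _ _ (exp_pos (INR k * a))) D_exp.
    by rewrite -exp_plus (_ : - ((INR k - 1) * a) + INR k * a = a); [|ring].
  have := Rmult_le_compat_l D _ _ D_ge0 q_le'.
  have := Rmult_le_compat_l _ _ _ (Cnorm_ge0 z.1) Dexp.
  lra.
- have k_eq : k = (l + 1)%N by lia.
  rewrite k_eq plus_INR /= in D_exp.
  have := Rmult_le_compat_r _ _ _ (Rlt_le _ _ (exp_pos (INR l * a))) D_exp.
  by rewrite -exp_plus (_ : - ((INR l + 1 - 1) * a) + INR l * a = 0) ?exp_0; [|ring].
Qed.

(* The coordinatewise growth estimate, in the variables p = |z'|,
   q = |z''|, u = e^(a/2), P = e^(l a/2): the image of z under a^(l+1) has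
   norm W = max(p P u, q / (P u)).  In each of the three regimes
   D P^2 max(p, q) <= (eta + 1) u P W, and always max(p, q) <= u P W;
   together they bound the covering count (c D P^2 + 1) times max(p, q). *)
Lemma growth_estimate (c eta D p q u P : R) :
  0 <= c -> 0 <= D <= eta -> 0 <= p -> 0 <= q -> 1 <= u -> 1 <= P ->
  (q <= p \/ (p <= q /\ (D * q <= p * (u * u) \/ D * (P * P) <= 1))) ->
  (c * D * (P * P) + 1) * Rmax p q <=
  (c * (eta + 1) + 1) * u * P * Rmax (p * (P * u)) (q * / (P * u)).
Proof.
move=> c_ge0 D_bd p_ge0 q_ge0 u_ge1 P_ge1 regime.
have u_ge0 : 0 <= u by lra.
have P_ge0 : 0 <= P by lra.
have eta_ge0 : 0 <= eta by lra.
have Pu_ge1 : 1 <= P * u by nra.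
set W := Rmax (p * _) _.
have pW : p * (P * u) <= W by apply: Rmax_l.
have W_ge0 : 0 <= W by apply: Rle_trans pW; apply: Rmult_le_pos; lra.
have qW : q <= W * (P * u).
  have := Rmult_le_compat_r (P * u) _ _ ltac:(lra) (Rmax_r (p * (P * u)) (q * / (P * u))).
  by rewrite -/W Rmult_assoc Rinv_l; lra.
have uPpW : u * P * (p * (P * u)) <= u * P * W.
  by apply: Rmult_le_compat_l => //; apply: Rmult_le_pos.
have max_le : Rmax p q <= u * P * W.
  have uP_ge1 : 1 <= u * P by nra.
  have := Rmult_le_compat_r W _ _ W_ge0 uP_ge1.
  have := Rmult_le_compat_l p _ _ p_ge0 Pu_ge1.
  by move=> pPu uPW; apply: Rmax_lub; lra.
have weighted : D * (P * P) * Rmax p q <= (eta + 1) * (u * P * W).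
  have uPW_ge0 : 0 <= u * P * W by apply: Rmult_le_pos => //; nra.
  have euPW_ge0 : 0 <= eta * (u * P * W) by apply: Rmult_le_pos.
  case: regime => [q_le_p|[p_le_q compensated]].
    rewrite Rmax_left //.
    have D_le : D <= eta * (u * u).
      have : eta * 1 <= eta * (u * u) by apply: Rmult_le_compat_l; nra.
      lra.
    have := Rmult_le_compat_r _ _ _ (Rmult_le_pos _ _ (Rmult_le_pos _ _ P_ge0 P_ge0) p_ge0) D_le.
    have := Rmult_le_compat_l eta _ _ eta_ge0 uPpW.
    lra.
  rewrite Rmax_right //.
  case: compensated => [Dq|DPP].
    have := Rmult_le_compat_l _ _ _ (Rmult_le_pos _ _ P_ge0 P_ge0) Dq.
    lra.
  have := Rmult_le_compat_r _ _ _ q_ge0 DPP.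
  lra.
have := Rmult_le_compat_l c _ _ c_ge0 weighted.
lra.
Qed.

(* The covering-count estimate for one coordinate of v, where
   D = min(eta, e^(b - n_j)) is the radius factor of the box D and
   c D e^(l a) + 1 bounds the number of pieces needed in that coordinate. *)
Lemma coordinate_growth {c eta a D : R} {l k : nat} {z : Cx * Cx} {s : ER} :
  0 <= c -> 0 < a -> 0 <= D <= eta -> (k <= l + 1)%N ->
  ((0 < k)%N -> D <= exp (- (INR (k - 1) * a))) ->
  in_Ishift l k a s -> ratio_rel z s ->
  (c * D * exp (INR l * a) + 1) * compnorm z <=
  (c * (eta + 1) + 1) * exp (a / 2) * exp (INR l * a / 2) *
  Rmax (Cnorm z.1 * exp (INR (l + 1) * a / 2))
       (Cnorm z.2 * exp (- (INR (l + 1) * a) / 2)).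
Proof.
move=> c_ge0 a_gt0 D_bd k_le D_le I_s ratio_s.
have regime := ratio_regimes a_gt0 (proj1 D_bd) k_le D_le I_s ratio_s.
have e_half x : exp x = exp (x / 2) * exp (x / 2) by rewrite -exp_plus; f_equal; field.
have e_succ : exp (INR (l + 1) * a / 2) = exp (INR l * a / 2) * exp (a / 2).
  by rewrite -exp_plus plus_INR /=; f_equal; field.
rewrite e_succ (_ : - (INR (l + 1) * a) / 2 = - (INR (l + 1) * a / 2)); last by field.
rewrite exp_Ropp e_succ (e_half (INR l * a)).
rewrite (e_half a) (e_half (INR l * a)) in regime.
have l_ge0 := pos_INR l.
by apply: growth_estimate => //; try exact: Cnorm_ge0; apply: exp_ge1; nra.
Qed.

(* The radius factor min(eta, e^(b - n_j)) of the box D in coordinate j;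
   note e^(b - n_j) = e^(-(k_j - 1) a_j) when J_j(V_m) = I_{k_j, j}, k_j >= 1. *)
Lemma Dbound_bounds eta aa k j : 0 < eta ->
  0 < Dbound eta aa k j <= eta /\
  ((0 < k j)%N -> Dbound eta aa k j <= exp (- (INR (k j - 1) * aa j))).
Proof.
move=> eta_gt0; rewrite /Dbound; case: eqP => [->|_]; first by split=> //; lra.
split; last by move=> _; apply: Rmin_r.
by split; [apply: Rmin_glb_lt; [lra | apply: exp_pos] | apply: Rmin_l].
Qed.

Definition cover_const (r s : nat) (B' B'' eta : R) (aa : nat -> R) : R :=
  prodR (r + s)
    (fun j => ((4 * B' / (B'' * eta) * (eta + 1) + 1) * exp (aa j / 2)) ^ delta r j).

Lemma cover_const_gt0 r s B' B'' eta aa :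
  0 < B' -> 0 < B'' -> 0 < eta -> 0 < cover_const r s B' B'' eta aa.
Proof.
move=> B'_gt0 B''_gt0 eta_gt0; apply: prodR_gt0 => j _; apply: pow_lt.
apply: Rmult_lt_0_compat; last exact: exp_pos.
suff : 0 <= 4 * B' / (B'' * eta) * (eta + 1) by lra.
by apply: Rmult_le_pos; [apply: Rle_mult_inv_pos; nra | lra].
Qed.

Lemma exp_hmax r s aa l : (forall j, (j < r + s)%N -> 0 < aa j) ->
  exp (hmax r s aa / 2 * INR l) =
  prodR (r + s) (fun j => exp (INR l * aa j / 2) ^ delta r j).
Proof.
move=> aa_gt0.
rewrite (@prodR_ext _ _ (fun j => exp (INR (delta r j) * (INR l * aa j / 2)))); last first.
  by move=> j _; rewrite exp_pow.
rewrite prodR_exp /hmax; f_equal.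
rewrite (_ : sumR _ _ / 2 * INR l =
             sumR (r + s) (fun j => INR (delta r j) * Rabs (aa j)) * (INR l / 2)); last by field.
rewrite sumR_mulr; apply: sumR_ext => j j_lt.
by rewrite Rabs_pos_eq; [field | apply: Rlt_le; apply: aa_gt0].
Qed.

Lemma count_norm_bound {r s aa} th {B' B'' eta l k} {v : Vec} :
  0 < B' -> 0 < B'' -> 0 < eta ->
  (forall j, (j < r + s)%N -> 0 < aa j) ->
  (forall j, (j < r + s)%N -> (k j <= l + 1)%N) ->
  (forall j, (j < r + s)%N ->
     exists sj, in_Ishift l (k j) (aa j) sj /\ ratio_rel (v j) sj) ->
  prodR (r + s) (fun j => (4 * (B' * Dbound eta aa k j) /
                             (B'' * eta * exp (- (INR l * aa j))) + 1) ^ delta r j) *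
    vnorm r s v <=
  cover_const r s B' B'' eta aa * exp (hmax r s aa / 2 * INR l) *
    vnorm r s (vapow aa th (l + 1) v).
Proof.
move=> B'_gt0 B''_gt0 eta_gt0 aa_gt0 k_le ratios.
rewrite exp_hmax // /vnorm /cover_const -!prodR_mul; apply: prodR_le => j j_lt.
have [sj [I_sj ratio_sj]] := ratios j j_lt.
have [[D_gt0 D_le] D_le_exp] := Dbound_bounds eta aa k j eta_gt0.
set D := Dbound eta aa k j in D_gt0 D_le D_le_exp *.
set c := 4 * B' / (B'' * eta).
have c_ge0 : 0 <= c by apply: Rle_mult_inv_pos; nra.
have -> : 4 * (B' * D) / (B'' * eta * exp (- (INR l * aa j))) =
          c * D * exp (INR l * aa j).
  rewrite /c exp_Ropp; field.
  by split; [lra | split; [lra | apply: Rgt_not_eq; apply: exp_pos]].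
have := coordinate_growth c_ge0 (aa_gt0 j j_lt) (conj (Rlt_le _ _ D_gt0) D_le)
          (k_le j j_lt) D_le_exp I_sj ratio_sj.
have [w1 w2] := vapow_norm aa th (l + 1) v j.
rewrite /compnorm w1 w2 => growth.
have count_ge0 : 0 <= c * D * exp (INR l * aa j) + 1.
  by have := exp_pos (INR l * aa j); have := Rmult_le_pos _ _ c_ge0 (Rlt_le _ _ D_gt0); nra.
have v_ge0 : 0 <= Rmax (Cnorm (v j).1) (Cnorm (v j).2).
  by apply: Rle_trans (Rmax_l _ _); apply: Cnorm_ge0.
split; first by apply: Rmult_le_pos; apply: pow_le.
rewrite -!Rpow_mult_distr; apply: pow_incr; split; first exact: Rmult_le_pos.
by apply: Rle_trans growth _; apply: Req_le; ring.
Qed.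

(* Since ||v|| > 1/M >= ||v a^(l+1)||, the estimate above bounds the number
   of boxes of radii rho_j needed to cover D by C e^(h_max l / 2). *)
Lemma cover_count_bound {r s aa} th {B' B'' eta l k} {v : Vec} (M : R) :
  0 < B' -> 0 < B'' -> 0 < eta ->
  (forall j, (j < r + s)%N -> 0 < aa j) ->
  (forall j, (j < r + s)%N -> (k j <= l + 1)%N) ->
  (forall j, (j < r + s)%N ->
     exists sj, in_Ishift l (k j) (aa j) sj /\ ratio_rel (v j) sj) ->
  / M < vnorm r s v -> vnorm r s (vapow aa th (l + 1) v) <= / M ->
  prodR (r + s) (fun j => (4 * (B' * Dbound eta aa k j) /
                             (B'' * eta * exp (- (INR l * aa j))) + 1) ^ delta r j) <=
  cover_const r s B' B'' eta aa * exp (hmax r s aa / 2 * INR l).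
Proof.
move=> B'_gt0 B''_gt0 eta_gt0 aa_gt0 k_le ratios v_large w_small.
have := count_norm_bound th B'_gt0 B''_gt0 eta_gt0 aa_gt0 k_le ratios.
have v_gt0 : 0 < vnorm r s v.
  apply: Rle_lt_trans v_large; apply: Rle_trans w_small.
  by apply: prodR_ge0 => j _; apply: pow_le; apply: Rle_trans (Rmax_l _ _); apply: Cnorm_ge0.
have CE_ge0 : 0 <= cover_const r s B' B'' eta aa * exp (hmax r s aa / 2 * INR l).
  by apply: Rmult_le_pos; apply: Rlt_le; [apply: cover_const_gt0 | apply: exp_pos].
move=> count_bound; apply: (Rmult_le_reg_r _ _ _ v_gt0).
by apply: Rle_trans count_bound _; apply: Rmult_le_compat_l => //; lra.
Qed.

(* Maximality of V_m = [b, b+l] with b >= 1 means b - 1 is not in V, i.e.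
   ht(T^(b-1) x) < M: every nonzero vector of Lambda_(T^(b-1) x) has
   norm > 1/M. *)
Lemma norm_before_interval {L : fieldExtType rat} {sigma : nat -> L -> Cx}
    {r s aa th M N V b l} {g : Gelt} {v : Vec} :
  1 <= M -> (forall n, V n -> (n < N)%N) -> max_interval V b l -> (1 <= b)%N ->
  in_QV sigma r s aa th M N V g ->
  in_lattice sigma r s (Tpow aa th (b - 1) g) v -> nonzero_vec r s v ->
  / M < vnorm r s v.
Proof.
move=> M_ge1 V_lt [V_b [b_first _]] b_ge1 QV v_lat v_nz.
have b1_lt : (b - 1 < N)%N by have := V_lt b (V_b b (leqnn b) (leq_addr l b)); lia.
have ht_b1 : ht_lt sigma r s (Tpow aa th (b - 1) g) M.
  apply: NNPP => not_ht; have V_b1 := proj1 (QV _ b1_lt) not_ht.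
  by case: b_first => [b0|]; [lia | ].
have := ht_b1 v v_lat v_nz.
have M_gt0 : 0 < M by lra.
move=> /(Rmult_lt_compat_l (/ M) _ _ (Rinv_0_lt_compat _ M_gt0)).
by rewrite -Rmult_assoc Rinv_l ?Rmult_1_l ?Rmult_1_r; lra.
Qed.

Lemma uplus_translate (t t0 : nat -> Cx) j :
  gmul (uplus t0) (uplus (fun i => Csub (t i) (t0 i))) j = uplus t j.
Proof.
rewrite /gmul /uplus /M2mul /=; case: (t j) (t0 j) => [? ?] [? ?].
by rewrite /Cadd /Cmul /Csub /Defs.C1 /C0 /=; f_equal; f_equal; ring.
Qed.

Theorem lemma5p4 :
  forall (L : fieldExtType rat) (r s : nat) (sigma : nat -> L -> Cx),
  embedding_family r s sigma ->
  forall aa th : nat -> R,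
  (forall j, (j < r)%N -> th j = 0) ->
  (forall j, (j < r + s)%N -> 0 <= th j <= 2 * PI) ->
  (forall j, (j < r + s)%N -> 0 < aa j) ->
  forall B' B'' eta : R, 0 < B' -> 0 < B'' -> 0 < eta ->
  exists C : R, 0 < C /\
  forall (M : R) (N : nat) (V : nat -> Prop) (b l : nat) (k : nat -> nat),
    1 <= M -> (1 <= N)%N ->
    (forall n, V n -> (n < N)%N) ->
    max_interval V b l -> (1 <= b)%N ->
    (forall j, (j < r + s)%N -> (k j <= l + 1)%N) ->
    (exists g : Gelt, in_G r s g /\ in_QJ sigma r s aa th M N V b l k g) ->
    exists (K : nat) (t0 : nat -> nat -> Cx),
      INR K <= C * exp (hmax r s aa / 2 * INR l) /\
      (forall i, (i < K)%N -> real_par r (t0 i)) /\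
      (forall g, in_D r s B' eta aa k g ->
         exists i, (i < K)%N /\
           exists h, in_E r s B'' eta aa l h /\ Geq r s g (gmul (uplus (t0 i)) h)).
Proof.
move=> L r s sigma _ aa th _ _ aa_gt0 B' B'' eta B'_gt0 B''_gt0 eta_gt0.
exists (cover_const r s B' B'' eta aa); split; first exact: cover_const_gt0.
move=> M N V b l k M_ge1 _ V_lt maxV b_ge1 k_le
  [g [_ [QV [v [v_lat [v_nz [v_small v_ratio]]]]]]].
pose rad j := B' * Dbound eta aa k j.
pose rho j := B'' * eta * exp (- (INR l * aa j)).
have rad_ge0 j : 0 <= rad j.
  by have [[D_gt0 _] _] := Dbound_bounds eta aa k j eta_gt0; rewrite /rad; nra.
have rho_gt0 j : 0 < rho j by apply: Rmult_lt_0_compat; [nra | apply: exp_pos].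
have [K [t0 [K_le [t0_real t0_cover]]]] :=
  @product_cover r (r + s) (fun j => (4 * rad j / rho j + 1) ^ delta r j) rad rho
    (fun j _ => coordinate_cover _ _ (j < r)%N (rho_gt0 j) (rad_ge0 j)).
exists K, t0; split; [|split].
- have v_large := norm_before_interval M_ge1 V_lt maxV b_ge1 QV v_lat v_nz.
  have w_small : vnorm r s (vapow aa th (l + 1) v) <= / M by apply: v_small; lia.
  exact: Rle_trans K_le (cover_count_bound th M B'_gt0 B''_gt0 eta_gt0 aa_gt0 k_le
                                           v_ratio v_large w_small).
- by move=> i _ j j_lt; apply: t0_real.
- move=> g' [t [t_real [t_in g'_eq]]].
  have [|i [i_lt close]] := t0_cover t; first by move=> j j_lt; split; [apply: t_in | apply: t_real].
  exists i; split => //; exists (uplus (fun j => Csub (t j) (t0 i j))); split.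
    exists (fun j => Csub (t j) (t0 i j)); split; last by split => // j j_lt; apply: close.
    by move=> j j_lt; rewrite /Csub /= t_real // t0_real //; lra.
  by move=> j j_lt; rewrite g'_eq // uplus_translate.
Qed.
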